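(* Let $V$ be a finite set of variables, $\mathcal C$ a set of betweenness constraints over $V$, and $\kappa\ge 0$ an integer. Apply the following reduction rule as long as possible: if $\mathcal C$ contains a complete triple of constraints, delete these three constraints from $\mathcal C$ and delete from $V$ every variable that appears only in constraints of that triple. Let $(V',\mathcal C')$ be the resulting instance. Then $(V,\mathcal C)$ (with parameter $\kappa$) is a Yes-instance of Betweenness Above Tight Lower Bound if and only if $(V',\mathcal C')$ (with parameter $\kappa$) is a Yes-instance.
   Context: A betweenness constraint over $V$ is written $(v_i,\{v_j,v_k\})$ with $v_i,v_j,v_k\in V$ distinct, meaning ''$v_i$ is between $v_j$ and $v_k$''. A bijection $\alpha:V\to\{1,\dots,|V|\}$ (a linear arrangement) satisfies $(v_i,\{v_j,v_k\})$ if $\alpha(v_j)<\alpha(v_i)<\alpha(v_k)$ or $\alpha(v_k)<\alpha(v_i)<\alpha(v_j)$. For a constraint $C$, $vars(C)$ is its set of three variables. Three distinct constraints $A,B,C\in\mathcal C$ form a complete triple if $vars(A)=vars(B)=vars(C)$. Betweenness Above Tight Lower Bound (BATLB): given $V$, $\mathcal C$ and integer $\kappa\ge0$, the instance is a Yes-instance iff there is a bijection $\alpha:V\to\{1,\dots,|V|\}$ satisfying at least $|\mathcal C|/3+\kappa$ constraints of $\mathcal C$. *)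

From mathcomp Require Import all_boot.
Set Implicit Arguments. Unset Strict Implicit. Unset Printing Implicit Defensive.

Section Betweenness.
Variable T : finType.

(* A betweenness constraint (v_i, {v_j, v_k}) is represented as the pair
   (v_i, {v_j, v_k}) : T * {set T}; well-formed when the set has exactly two
   elements and does not contain v_i. *)
Definition constraint := (T * {set T})%type.

Definition wf_constraint (c : constraint) : bool :=
  (#|c.2| == 2) && (c.1 \notin c.2).

Definition vars (c : constraint) : {set T} := c.1 |: c.2.

Definition wf_instance (V : {set T}) (C : {set constraint}) : Prop :=
  forall c, c \in C -> wf_constraint c /\ vars c \subset V.

Definition arrangement (V : {set T}) (alpha : T -> nat) : Prop :=
  {in V &, injective alpha} /\
  (forall x, x \in V -> 1 <= alpha x <= #|V|) /\
  (forall n, 1 <= n <= #|V| -> exists2 x, x \in V & alpha x = n).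

Definition satisfies (alpha : T -> nat) (c : constraint) : bool :=
  [exists j in c.2, exists k in c.2, (alpha j < alpha c.1) && (alpha c.1 < alpha k)].

(* Yes-instance of BATLB: some arrangement satisfies >= |C|/3 + kappa
   constraints, i.e. 3 * #sat >= |C| + 3 kappa. *)
Definition BATLB_yes (V : {set T}) (C : {set constraint}) (kappa : nat) : Prop :=
  exists alpha : T -> nat, arrangement V alpha /\
    #|C| + 3 * kappa <= 3 * #|[set c in C | satisfies alpha c]|.

Definition complete_triple (C : {set constraint}) (A B D : constraint) : Prop :=
  [/\ A \in C, B \in C, D \in C,
      [/\ A != B, A != D & B != D] &
      vars A = vars B /\ vars A = vars D].

Definition has_complete_triple (C : {set constraint}) : Prop :=
  exists A B D, complete_triple C A B D.

Definition reduce_step (V : {set T}) (C : {set constraint})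
    (V' : {set T}) (C' : {set constraint}) : Prop :=
  exists A B D, complete_triple C A B D /\
    C' = C :\: [set A; B; D] /\
    V' = V :\: [set x in vars A | [forall c in C', x \notin vars c]].

Inductive reduces : {set T} -> {set constraint} -> {set T} -> {set constraint} -> Prop :=
| reduces_refl V C : reduces V C V C
| reduces_step V C V1 C1 V2 C2 :
    reduce_step V C V1 C1 -> reduces V1 C1 V2 C2 -> reduces V C V2 C2.

End Betweenness.

(* Every arrangement satisfies exactly one constraint of a complete triple,
   since of three distinct positions exactly one lies between the other two.
   Deleting a complete triple therefore lowers |C| by 3 and the number of
   satisfied constraints by exactly 1, which preserves |C|/3 + kappa.  The
   variables deleted with the triple occur in no remaining constraint, so any
   arrangement of the smaller instance extends to the larger one.  Working with
   arbitrary injective maps instead of bijections onto {1, ..., |V|} makes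
   restricting and extending arrangements trivial; ranking recovers a bijection. *)

From mathcomp Require Import all_boot zify.

Set Implicit Arguments. Unset Strict Implicit. Unset Printing Implicit Defensive.

Lemma card_setId_sum (I : finType) (C : {set I}) (P : pred I) :
  #|[set i in C | P i]| = \sum_(i in C) P i.
Proof.
rewrite -sum1_card big_mkcond /= [RHS]big_mkcond /=.
by apply: eq_bigr => i _; rewrite inE; case: (i \in C); case: (P i).
Qed.

Lemma sum_setD3 (I : finType) (F : I -> nat) (C : {set I}) a b d :
  a \in C -> b \in C -> d \in C -> a != b -> a != d -> b != d ->
  \sum_(i in C) F i = F a + F b + F d + \sum_(i in C :\: [set a; b; d]) F i.
Proof.
move=> aC bC dC ab ad bd.
have bCa : b \in C :\ a by rewrite !inE eq_sym ab.
have dCab : d \in C :\ a :\ b by rewrite !inE ![d == _]eq_sym ad bd.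
rewrite (big_setD1 a aC) (big_setD1 b bCa) (big_setD1 d dCab) /= !addnA.
by rewrite -!setDDl.
Qed.

Lemma exists_in_set3 (I : finType) (P : pred I) a b d :
  [exists i in [set a; b; d], P i] = [|| P a, P b | P d].
Proof.
apply/existsP/or3P => [[i /andP[]]|].
  by rewrite !inE -orbA => /or3P[] /eqP-> Pi; [apply: Or31 | apply: Or32 | apply: Or33].
by case=> Pi; [exists a | exists b | exists d]; rewrite !inE eqxx ?orbT.
Qed.

Section Betweenness.
Variable T : finType.
Implicit Types (V W : {set T}) (C : {set constraint T}) (c : constraint T).
Implicit Types (alpha beta : T -> nat) (k : nat).

Lemma satisfies_order alpha beta c :
  {in vars c &, forall x y, (alpha x < alpha y) = (beta x < beta y)} ->
  satisfies alpha c = satisfies beta c.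
Proof.
move=> ord; apply: eq_existsb => j; apply: andb_id2l => j2.
apply: eq_existsb => l; apply: andb_id2l => l2.
have [c1V jV lV] : [/\ c.1 \in vars c, j \in vars c & l \in vars c].
  by rewrite !inE j2 l2 eqxx !orbT.
by rewrite !ord.
Qed.

Lemma satisfied_order V C alpha beta :
  wf_instance V C ->
  {in V &, forall x y, (alpha x < alpha y) = (beta x < beta y)} ->
  [set c in C | satisfies alpha c] = [set c in C | satisfies beta c].
Proof.
move=> wf ord; apply/setP => c; rewrite !inE; case cC: (c \in C) => //=.
by have [_ /subsetP sub] := wf c cC; apply: satisfies_order => x y /sub xV /sub; apply: ord.
Qed.

Definition rank V alpha x := #|[set y in V | alpha y <= alpha x]|.

Lemma rank_lt V alpha :
  {in V &, forall x y, (rank V alpha x < rank V alpha y) = (alpha x < alpha y)}.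
Proof.
move=> x y xV yV; apply/idP/idP => [|lt_xy].
  apply: contraLR; rewrite -!leqNgt => le_yx.
  apply/subset_leq_card/subsetP => z; rewrite !inE => /andP[-> le_zy].
  exact: leq_trans le_zy le_yx.
apply/proper_card/properP; split.
  apply/subsetP => z; rewrite !inE => /andP[-> le_zx].
  exact: leq_trans le_zx (ltnW lt_xy).
by exists y; rewrite !inE yV //= -ltnNge.
Qed.

Lemma rank_inj V alpha :
  {in V &, injective alpha} -> {in V &, injective (rank V alpha)}.
Proof.
move=> inj x y xV yV e; case: (ltngtP (alpha x) (alpha y)) => [||/inj->//];
  by rewrite -(@rank_lt V) // e ltnn.
Qed.

Lemma rank_bounds V alpha x : x \in V -> 1 <= rank V alpha x <= #|V|.
Proof.
move=> xV; apply/andP; split.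
  by apply/card_gt0P; exists x; rewrite inE xV leqnn.
by apply/subset_leq_card/subsetP => z; rewrite inE => /andP[].
Qed.

Lemma inj_in_onto_iota V (f : T -> nat) :
  {in V &, injective f} -> {in V, forall x, 1 <= f x <= #|V|} ->
  forall n, 1 <= n <= #|V| -> exists2 x, x \in V & f x = n.
Proof.
move=> inj rng n n_rng.
pose s := [seq f x | x <- enum V].
have s_uniq : uniq s.
  by rewrite map_inj_in_uniq ?enum_uniq // => x y; rewrite !mem_enum; apply: inj.
have s_sub : {subset s <= iota 1 #|V|}.
  move=> m /mapP[x]; rewrite mem_enum => xV ->.
  by rewrite mem_iota; have := rng x xV; lia.
have s_size : size (iota 1 #|V|) <= size s by rewrite size_iota size_map -cardE.
have [_ s_eq] := uniq_min_size s_uniq s_sub s_size.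
have : n \in s by rewrite s_eq mem_iota; lia.
by case/mapP => x; rewrite mem_enum => xV ->; exists x.
Qed.

Lemma rank_arrangement V alpha :
  {in V &, injective alpha} -> arrangement V (rank V alpha).
Proof.
move=> inj; have rng : {in V, forall x, 1 <= rank V alpha x <= #|V|}.
  exact: rank_bounds.
split; [exact: rank_inj | split; [exact: rng | exact: inj_in_onto_iota (rank_inj inj) rng]].
Qed.

Definition BATLB_inj_yes V C k :=
  exists2 alpha, {in V &, injective alpha} &
    #|C| + 3 * k <= 3 * #|[set c in C | satisfies alpha c]|.

Lemma BATLB_yesE V C k :
  wf_instance V C -> BATLB_yes V C k <-> BATLB_inj_yes V C k.
Proof.
move=> wf; split => [[alpha [[inj _] h]] | [alpha inj h]]; first by exists alpha.
exists (rank V alpha); split; first exact: rank_arrangement.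
by rewrite (satisfied_order wf (@rank_lt V alpha)).
Qed.

Definition between alpha W x :=
  [exists j in W, alpha j < alpha x] && [exists l in W, alpha x < alpha l].

Lemma satisfies_between alpha c : satisfies alpha c = between alpha (vars c) c.1.
Proof.
have notc1 y : alpha y != alpha c.1 -> y \in vars c -> y \in c.2.
  by move=> ne /setU1P[eq_y|//]; rewrite eq_y eqxx in ne.
apply/existsP/andP => [[j /andP[j2 /existsP[l /andP[l2 /andP[ltj ltl]]]]]|].
  by split; apply/existsP; [exists j | exists l]; rewrite ?setU1r.
case=> /existsP[j /andP[jc ltj]] /existsP[l /andP[lc ltl]].
exists j; rewrite notc1 ?ltn_eqF //=; apply/existsP; exists l.
by rewrite notc1 ?ltj ?ltl // eq_sym ltn_eqF.
Qed.

Lemma between3 alpha a b d :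
  alpha a != alpha b -> alpha a != alpha d -> alpha b != alpha d ->
  between alpha [set a; b; d] a + between alpha [set a; b; d] b
    + between alpha [set a; b; d] d = 1.
Proof.
by rewrite /between !exists_in_set3 !ltnn /=; move: (alpha a) (alpha b) (alpha d); lia.
Qed.

Lemma wf_constraint_inj c c' :
  wf_constraint c -> wf_constraint c' -> vars c = vars c' -> c.1 = c'.1 -> c = c'.
Proof.
have args (x : constraint T) : wf_constraint x -> x.2 = vars x :\ x.1.
  by case/andP=> _ /setU1K.
move=> wc wc' e e1; apply: injective_projections => //.
by rewrite (args c) // (args c') // e e1.
Qed.

Lemma complete_triple_vars V C A B D :
  wf_instance V C -> complete_triple C A B D ->
  [/\ A.1 != B.1, A.1 != D.1, B.1 != D.1 & vars A = [set A.1; B.1; D.1]].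
Proof.
move=> wf [AC BC DC [AB AD BD] [eAB eAD]].
have [[wA _] [wB _] [wD _]] := And3 (wf A AC) (wf B BC) (wf D DC).
have ab : A.1 != B.1 by apply: contra_neq AB; apply: wf_constraint_inj.
have ad : A.1 != D.1 by apply: contra_neq AD; apply: wf_constraint_inj.
have bd : B.1 != D.1 by apply: contra_neq BD; apply: wf_constraint_inj; rewrite -?eAB.
split => //; apply/esym/eqP; rewrite eqEcard; apply/andP; split.
  have bA : B.1 \in vars A by rewrite eAB; apply: setU11.
  have dA : D.1 \in vars A by rewrite eAD; apply: setU11.
  by rewrite !subUset !sub1set bA dA setU11.
case/andP: wA => /eqP cardA2 A1N.
by rewrite /vars cardsU1 A1N cardA2 -setUA cardsU1 cards2 !inE negb_or ab ad bd.
Qed.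

Lemma complete_triple_satisfies alpha V C A B D :
  wf_instance V C -> complete_triple C A B D -> {in vars A &, injective alpha} ->
  satisfies alpha A + satisfies alpha B + satisfies alpha D = 1.
Proof.
move=> wf tr inj; have [_ _ _ _ [eAB eAD]] := tr.
have [ab ad bd eA] := complete_triple_vars wf tr.
have neq x y : x != y -> x \in vars A -> y \in vars A -> alpha x != alpha y.
  by move=> xy xA yA; apply: contra_neq xy; apply: inj.
have [aA bA dA] : [/\ A.1 \in vars A, B.1 \in vars A & D.1 \in vars A].
  by rewrite eA !inE !eqxx !orbT.
by rewrite !satisfies_between -eAB -eAD eA between3 ?neq.
Qed.

Lemma complete_triple_card alpha V C A B D :
  wf_instance V C -> complete_triple C A B D -> {in vars A &, injective alpha} ->
  #|[set c in C | satisfies alpha c]|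
    = #|[set c in C :\: [set A; B; D] | satisfies alpha c]|.+1
  /\ #|C| = #|C :\: [set A; B; D]| + 3.
Proof.
move=> wf tr inj; have [AC BC DC [AB AD BD] _] := tr.
rewrite !card_setId_sum -!sum1_card !(sum_setD3 _ AC BC DC AB AD BD).
by rewrite (complete_triple_satisfies wf tr inj); split; [exact: add1n | exact: addnC].
Qed.

Lemma extend_inj_in W alpha :
  {in W &, injective alpha} -> exists2 beta, injective beta & {in W, beta =1 alpha}.
Proof.
move=> inj; pose M := \sum_(y in W) alpha y.
have le_M y : y \in W -> alpha y <= M by move=> yW; rewrite /M (bigD1 y) //= leq_addr.
exists (fun x => if x \in W then alpha x else M.+1 + enum_rank x); last first.
  by move=> x ->.
move=> x y; case xW: (x \in W); case yW: (y \in W).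
- exact: inj.
- by have := le_M x xW; lia.
- by have := le_M y yW; lia.
- by move/addnI/val_inj/enum_rank_inj.
Qed.

Lemma reduce_step_wf V C V1 C1 :
  wf_instance V C -> reduce_step V C V1 C1 -> wf_instance V1 C1.
Proof.
move=> wf [A [B [D [_ [eC eV]]]]] c cC1.
have cC : c \in C by move: cC1; rewrite eC inE => /andP[].
have [wc /subsetP cV] := wf c cC.
split => //; apply/subsetP => x xc.
rewrite eV !inE cV // andbT negb_and negb_forall; apply/orP; right.
by apply/existsP; exists c; rewrite cC1 xc.
Qed.

Lemma reduce_step_yes V C V1 C1 k :
  wf_instance V C -> reduce_step V C V1 C1 ->
  BATLB_inj_yes V C k <-> BATLB_inj_yes V1 C1 k.
Proof.
move=> wf step; have wf1 := reduce_step_wf wf step.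
have [A [B [D [tr [eC eV]]]]] := step.
have [AC _ _ _ _] := tr; have [_ /subsetP AV] := wf A AC.
have V1V : V1 \subset V by rewrite eV subsetDl.
split=> [[alpha inj] | [alpha inj]].
  have inj_A : {in vars A &, injective alpha} by move=> x y /AV xV /AV; apply: inj.
  have [-> ->] := complete_triple_card wf tr inj_A; rewrite -eC => h.
  by exists alpha; [apply: sub_in2 inj => x /(subsetP V1V) | lia].
have [beta beta_inj beta_alpha] := extend_inj_in inj => h.
exists beta; first exact: in2W.
have [-> ->] := complete_triple_card wf tr (in2W beta_inj).
rewrite -eC (satisfied_order (alpha := beta) (beta := alpha) wf1); first lia.
by move=> x y xV1 yV1; rewrite !beta_alpha.
Qed.

Lemma reduces_yes V C V' C' k :
  wf_instance V C -> reduces V C V' C' ->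
  wf_instance V' C' /\ (BATLB_inj_yes V C k <-> BATLB_inj_yes V' C' k).
Proof.
move=> wf red; elim: red wf => // V0 C0 V1 C1 V2 C2 step _ IH wf0.
have [wf2 e] := IH (reduce_step_wf wf0 step).
by split; rewrite // (reduce_step_yes k wf0 step).
Qed.

End Betweenness.

Theorem lemma3 (T : finType) (V : {set T}) (C : {set constraint T}) (kappa : nat)
    (V' : {set T}) (C' : {set constraint T}) :
  wf_instance V C ->
  reduces V C V' C' ->
  ~ has_complete_triple C' ->
  (BATLB_yes V C kappa <-> BATLB_yes V' C' kappa).
Proof.
move=> wf red _; have [wf' e] := reduces_yes kappa wf red.
by rewrite (BATLB_yesE _ wf) (BATLB_yesE _ wf').
Qed.
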